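(* Let $k\ge1$ and let $S_1,\dots,S_k\in\mathcal{B}_A(\mathcal{H})$. Then for every positive integer $n$, $$\omega_A^{2n}\Big(\sum_{i=1}^kS_i\Big)\le\frac{k^{2n-1}}{\sqrt2}\sum_{i=1}^k\omega_A\Big(\big(S_i^{\sharp_A}S_i\big)^n+i\,\big(S_iS_i^{\sharp_A}\big)^n\Big),$$ where the $i$ multiplying $\big(S_iS_i^{\sharp_A}\big)^n$ is the imaginary unit.
   Context: $\mathcal{H}$ is a complex Hilbert space with inner product $\langle\cdot,\cdot\rangle$, and $A$ is a fixed nonzero positive bounded operator on $\mathcal{H}$. Set $\langle x,y\rangle_A=\langle Ax,y\rangle$ and $\|x\|_A=\|A^{1/2}x\|$. $\mathcal{B}_A(\mathcal{H})$ is the set of bounded operators $T$ for which there exists a bounded $S$ with $\langle Tx,y\rangle_A=\langle x,Sy\rangle_A$ for all $x,y$ (equivalently $\mathcal{R}(T^*A)\subseteq\mathcal{R}(A)$). For $T\in\mathcal{B}_A(\mathcal{H})$, $T^{\sharp_A}=A^\dagger T^*A$ ($A^\dagger$ the Moore–Penrose inverse) is the reduced solution of $AX=T^*A$. $\omega_A(T)=\sup\{|\langle Tx,x\rangle_A|:\|x\|_A=1\}$. *)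

From HB Require Import structures.
From mathcomp Require Import all_boot all_order all_algebra.
From mathcomp Require Import boolp classical_sets reals.
From mathcomp Require Import complex.
From Stdlib Require Import ClassicalEpsilon.
Set Implicit Arguments. Unset Strict Implicit. Unset Printing Implicit Defensive.
Import Order.TTheory GRing.Theory Num.Theory.
Local Open Scope ring_scope.
Local Open Scope classical_set_scope.

Record hilbert (R : realType) (V : lmodType R[i]) := Hilbert {
  ip : V -> V -> R[i];
  ipDl : forall x y z, ip (x + y) z = ip x z + ip y z;
  ipZl : forall (a : R[i]) x y, ip (a *: x) y = a * ip x y;
  ip_conj : forall x y, ip y x = ((ip x y)^*)%C;
  ip_ge0 : forall x, 0 <= ip x x;
  ip_eq0 : forall x, ip x x = 0 -> x = 0;
  ip_complete : forall u : nat -> V,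
    (forall e : R, 0 < e -> exists N, forall m n, (N <= m)%N -> (N <= n)%N ->
       Num.sqrt (complex.Re (ip (u m - u n) (u m - u n))) < e) ->
    exists l : V, forall e : R, 0 < e -> exists N, forall n, (N <= n)%N ->
       Num.sqrt (complex.Re (ip (u n - l) (u n - l))) < e
}.

Section Ops.
Variables (R : realType) (V : lmodType R[i]) (HS : hilbert V).

Definition inner (x y : V) : R[i] := ip HS x y.
Definition hnorm (x : V) : R := Num.sqrt (complex.Re (inner x x)).

Definition bounded_op (T : V -> V) : Prop :=
  (forall x y, T (x + y) = T x + T y) /\
  (forall (a : R[i]) x, T (a *: x) = a *: T x) /\
  exists M : R, forall x, hnorm (T x) <= M * hnorm x.

Definition positive_op (A : V -> V) : Prop :=
  bounded_op A /\ forall x, 0 <= inner (A x) x.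

(* semi-inner product <x,y>_A = <Ax,y> and seminorm ||x||_A = ||A^{1/2}x|| = sqrt <Ax,x> *)
Definition innerA (A : V -> V) (x y : V) : R[i] := inner (A x) y.
Definition normA (A : V -> V) (x : V) : R := Num.sqrt (complex.Re (innerA A x x)).

Definition BA (A T : V -> V) : Prop :=
  bounded_op T /\
  exists S, bounded_op S /\ forall x y, innerA A (T x) y = innerA A x (S y).

(* T^{#_A} = A^dagger T^* A, i.e. the reduced solution X of A X = T^* A:
   A X = T^* A  (<=> <A X x, y> = <A x, T y> for all x y), and
   R(X) is contained in N(A)^perp. *)
Definition reduced_sol (A T X : V -> V) : Prop :=
  (forall x y, inner (A (X x)) y = inner (A x) (T y)) /\
  (forall x z, A z = 0 -> inner (X x) z = 0).

Definition sharpA (A T : V -> V) : V -> V :=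
  epsilon (inhabits (fun _ => 0)) (reduced_sol A T).

Definition omegaA (A T : V -> V) : R :=
  sup [set r : R | exists x : V, normA A x = 1 /\
                     r = complex.Re `|innerA A (T x) x| ].

Definition opsum (k : nat) (S : 'I_k -> V -> V) : V -> V :=
  fun x => \sum_(i < k) S i x.
Definition opadd (T U : V -> V) : V -> V := fun x => T x + U x.
Definition opscale (a : R[i]) (T : V -> V) : V -> V := fun x => a *: T x.
Definition opcomp (T U : V -> V) : V -> V := fun x => T (U x).
Definition oppow (T : V -> V) (n : nat) : V -> V := iter n (opcomp T) id.

End Ops.

(** For a single operator T in B_A(H) and ||x||_A = 1, Cauchy-Schwarz for the
    semi-inner product <.,.>_A gives |<Tx,x>_A|^2 <= <T^#T x,x>_A and
    |<Tx,x>_A|^2 <= <TT^# x,x>_A. Both T^#T and TT^# are A-selfadjoint and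
    A-positive, so j |-> <P^j x,x>_A is log-convex, which yields McCarthy's
    inequality <Px,x>_A^n <= <P^n x,x>_A and raises both bounds to the n-th
    power. They are the real and imaginary parts of
    <((T^#T)^n + i (TT^#)^n) x, x>_A, whose modulus is therefore at least
    sqrt 2 |<Tx,x>_A|^(2n). For a sum of k operators, the triangle inequality
    and the power-mean inequality (r_1 + ... + r_k)^(2n) <= k^(2n-1) sum r_i^(2n)
    conclude.

    Two facts make the numerical radii meaningful: an operator in B_A(H) is
    bounded for the A-seminorm (log-convexity of j |-> ||B^j x||_A again), so the
    suprema are finite; and T^# exists because the completeness of H provides the
    orthogonal projection onto the closed subspace N(A). *)

From mathcomp Require Import all_boot all_order all_algebra.
From mathcomp Require Import boolp classical_sets reals.
From mathcomp Require Import complex.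
From mathcomp Require Import ring lra.
From Stdlib Require Import ClassicalEpsilon.
Import Order.TTheory GRing.Theory Num.Theory.
Local Open Scope ring_scope.

Set Implicit Arguments. Unset Strict Implicit. Unset Printing Implicit Defensive.

Local Notation Re := complex.Re.
Local Notation Im := complex.Im.

Definition modsq (R : rcfType) (c : R[i]) : R := Re c ^+ 2 + Im c ^+ 2.

Lemma modsq_ge0 (R : rcfType) (c : R[i]) : 0 <= modsq c.
Proof. by rewrite addr_ge0 ?sqr_ge0. Qed.

Lemma modsq_eq0 (R : rcfType) (c : R[i]) : modsq c = 0 -> c = 0.
Proof.
case: c => a b; rewrite /modsq /= => /eqP; rewrite paddr_eq0 ?sqr_ge0 //.
by rewrite !sqrf_eq0 => /andP[/eqP -> /eqP ->].
Qed.

Lemma Re_sqr_le_modsq (R : rcfType) (c : R[i]) : Re c ^+ 2 <= modsq c.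
Proof. by rewrite lerDl sqr_ge0. Qed.

Lemma Re_norm (R : rcfType) (c : R[i]) : Re `|c| = Num.sqrt (modsq c).
Proof. by rewrite normc_def. Qed.

Lemma Re_norm_ge0 (R : rcfType) (c : R[i]) : 0 <= Re `|c|.
Proof. by rewrite Re_norm sqrtr_ge0. Qed.

Lemma Re_norm_complex (R : rcfType) (p q : R) :
  Re `|(p%:C + 'i * q%:C)%C| = Num.sqrt (p ^+ 2 + q ^+ 2).
Proof. by rewrite Re_norm /modsq; simpc. Qed.

Lemma Re_norm_expr2n (R : rcfType) (c : R[i]) n : Re `|c| ^+ (2 * n) = modsq c ^+ n.
Proof. by rewrite exprM Re_norm sqr_sqrtr ?modsq_ge0. Qed.

Lemma Re_le (R : rcfType) (a b : R[i]) : a <= b -> Re a <= Re b.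
Proof. by rewrite lecE => /andP[]. Qed.

Lemma Re_ge0 (R : rcfType) (c : R[i]) : 0 <= c -> 0 <= Re c.
Proof. by rewrite lecE => /andP[]. Qed.

Section HermitianForm.
Variables (R : realType) (V : lmodType R[i]) (f : V -> V -> R[i]).
Hypothesis fDl : forall x y z, f (x + y) z = f x z + f y z.
Hypothesis fZl : forall a x y, f (a *: x) y = a * f x y.
Hypothesis f_conj : forall x y, f y x = (f x y)^*%C.

Lemma herm_conj x y : (f x y)^*%C = f y x.
Proof. by rewrite f_conj conjcK. Qed.

Lemma hermDr x y z : f x (y + z) = f x y + f x z.
Proof. by rewrite f_conj fDl rmorphD /= !herm_conj. Qed.

Lemma hermZr a x y : f x (a *: y) = a^*%C * f x y.
Proof. by rewrite f_conj fZl rmorphM /= herm_conj. Qed.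

Lemma hermNl x y : f (- x) y = - f x y.
Proof. by rewrite -scaleN1r fZl mulN1r. Qed.

Lemma hermNr x y : f x (- y) = - f x y.
Proof. by rewrite f_conj hermNl rmorphN /= herm_conj. Qed.

Lemma hermBl x y z : f (x - y) z = f x z - f y z.
Proof. by rewrite fDl hermNl. Qed.

Lemma hermBr x y z : f x (y - z) = f x y - f x z.
Proof. by rewrite hermDr hermNr. Qed.

Lemma herm0l y : f 0 y = 0.
Proof. by rewrite -(scale0r (0 : V)) fZl mul0r. Qed.

Lemma Re_herm_sym x y : Re (f y x) = Re (f x y).
Proof. by rewrite f_conj; case: (f x y). Qed.

Lemma Re_hermDD x y :
  Re (f (x + y) (x + y)) = Re (f x x) + 2 * Re (f x y) + Re (f y y).
Proof. by rewrite fDl !hermDr !raddfD /= (Re_herm_sym y x); ring. Qed.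

Lemma Re_hermNN x : Re (f (- x) (- x)) = Re (f x x).
Proof. by rewrite hermNl hermNr opprK. Qed.

Lemma Re_herm_parallelogram x y :
  Re (f (x + y) (x + y)) + Re (f (x - y) (x - y)) = 2 * Re (f x x) + 2 * Re (f y y).
Proof. by rewrite !Re_hermDD Re_hermNN hermNr raddfN /=; ring. Qed.

Lemma Re_herm_expand x y (t : R) :
  let z := x - (t%:C * f x y)%C *: y in
  Re (f z z) = Re (f x x) - 2 * t * modsq (f x y) + t ^+ 2 * modsq (f x y) * Re (f y y).
Proof.
rewrite /= hermBl !hermBr !fZl !hermZr (f_conj x y) /modsq.
by case: (f x y) (f x x) (f y y) => [a b] [p p'] [s s']; rewrite /conjc; simpc => /=; ring.
Qed.

End HermitianForm.

Lemma le_of_quadratic_ge0 (R : realFieldType) (p m s : R) : 0 <= p -> 0 <= s ->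
  (forall t, 0 <= t -> 0 <= p - 2 * t * m + t ^+ 2 * m * s) -> m <= p * s.
Proof.
move=> p0 s0 hq.
have [s_gt0 | s_le0] := ltrP 0 s.
  have := hq s^-1; rewrite invr_ge0 s0 => /(_ isT) h.
  have := mulr_ge0 s0 h.
  have -> : s * (p - 2 * s^-1 * m + s^-1 ^+ 2 * m * s) = p * s - m.
    by field; rewrite gt_eqF.
  by rewrite subr_ge0.
have s_eq0 : s = 0 by apply/le_anti/andP.
rewrite s_eq0 mulr0; have [m_gt0 | //] := ltrP 0 m.
have t0 : 0 <= (p + 1) / (2 * m) by rewrite divr_ge0 ?addr_ge0 ?mulr_ge0 ?(ltW m_gt0).
have := hq _ t0.
have -> : p - 2 * ((p + 1) / (2 * m)) * m + ((p + 1) / (2 * m)) ^+ 2 * m * s = -1.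
  by rewrite s_eq0; field; rewrite gt_eqF.
by rewrite ler0N1.
Qed.

Section PositiveHermitianForm.
Variables (R : realType) (V : lmodType R[i]) (f : V -> V -> R[i]).
Hypothesis fDl : forall x y z, f (x + y) z = f x z + f y z.
Hypothesis fZl : forall a x y, f (a *: x) y = a * f x y.
Hypothesis f_conj : forall x y, f y x = (f x y)^*%C.
Hypothesis f_ge0 : forall x, 0 <= f x x.

Lemma Re_herm_ge0 x : 0 <= Re (f x x).
Proof. exact: Re_ge0 (f_ge0 x). Qed.

Lemma herm_CauchySchwarz x y : modsq (f x y) <= Re (f x x) * Re (f y y).
Proof.
apply: le_of_quadratic_ge0; rewrite ?Re_herm_ge0 ?modsq_ge0 // => t _.
by rewrite -(Re_herm_expand fDl fZl f_conj); apply: Re_herm_ge0.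
Qed.

Definition seminorm x := Num.sqrt (Re (f x x)).

Lemma seminorm_ge0 x : 0 <= seminorm x.
Proof. exact: sqrtr_ge0. Qed.

Lemma seminorm_sqr x : seminorm x ^+ 2 = Re (f x x).
Proof. by rewrite sqr_sqrtr // Re_herm_ge0. Qed.

Lemma Re_herm_le x y : Re (f x y) <= seminorm x * seminorm y.
Proof.
have [xy_le0 | xy_gt0] := lerP (Re (f x y)) 0.
  by apply: le_trans xy_le0 _; rewrite mulr_ge0 ?seminorm_ge0.
rewrite -(ler_pXn2r (n := 2)) ?nnegrE ?mulr_ge0 ?seminorm_ge0 ?(ltW xy_gt0) //.
rewrite exprMn !seminorm_sqr.
exact: le_trans (Re_sqr_le_modsq _) (herm_CauchySchwarz x y).
Qed.

Lemma seminormD x y : seminorm (x + y) <= seminorm x + seminorm y.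
Proof.
rewrite -(ler_pXn2r (n := 2)) ?nnegrE ?addr_ge0 ?seminorm_ge0 //.
rewrite sqrrD !seminorm_sqr (Re_hermDD fDl f_conj).
by have := Re_herm_le x y; lra.
Qed.

Lemma herm_eq0_of_seminorm_eq0 x w : seminorm x = 0 -> f x w = 0.
Proof.
move=> x0; apply: modsq_eq0; apply/le_anti; rewrite modsq_ge0 andbT.
by have := herm_CauchySchwarz x w; rewrite -seminorm_sqr x0 expr0n mul0r.
Qed.

End PositiveHermitianForm.

Section Polarization.
Variables (R : realType) (V : lmodType R[i]) (f1 f2 : V -> V -> R[i]).
Hypotheses (f1Dl : forall x y z, f1 (x + y) z = f1 x z + f1 y z)
           (f1Dr : forall x y z, f1 x (y + z) = f1 x y + f1 x z)
           (f1Zl : forall a x y, f1 (a *: x) y = a * f1 x y)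
           (f1Zr : forall a x y, f1 x (a *: y) = a^*%C * f1 x y).
Hypotheses (f2Dl : forall x y z, f2 (x + y) z = f2 x z + f2 y z)
           (f2Dr : forall x y z, f2 x (y + z) = f2 x y + f2 x z)
           (f2Zl : forall a x y, f2 (a *: x) y = a * f2 x y)
           (f2Zr : forall a x y, f2 x (a *: y) = a^*%C * f2 x y).

Lemma sesquilinear_eq_of_diag : (forall x, f1 x x = f2 x x) -> forall x y, f1 x y = f2 x y.
Proof.
move=> fdiag x y.
have := fdiag (x + y); have := fdiag (x + 'i%C *: y).
rewrite !f1Dl !f2Dl !f1Dr !f2Dr !f1Zl !f2Zl !f1Zr !f2Zr !fdiag.
move: (f1 x y) (f1 y x) (f2 x y) (f2 y x) (f2 x x) (f2 y y) =>
  [a1 a2] [b1 b2] [c1 c2] [d1 d2] [p1 p2] [q1 q2].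
rewrite /conjc; simpc => /eqP; rewrite eq_complex /= => /andP[/eqP e1 /eqP e2].
move=> /eqP; rewrite eq_complex /= => /andP[/eqP e3 /eqP e4].
by apply/eqP; rewrite eq_complex /=; apply/andP; split; apply/eqP; lra.
Qed.

End Polarization.

Lemma exists_inv_succ_lt (R : archiRealFieldType) (e : R) : 0 < e ->
  exists N, forall m, (N <= m)%N -> m.+1%:R^-1 < e.
Proof.
move=> e_gt0; exists (Num.bound e^-1) => m Nm.
rewrite invf_plt ?posrE ?ltr0Sn //.
apply: lt_le_trans (archi_boundP _) _; first by rewrite invr_ge0 ltW.
by rewrite ler_nat (leq_trans Nm).
Qed.

Lemma sqrtrD_le (R : rcfType) (a b : R) : 0 <= a -> 0 <= b ->
  Num.sqrt (a + b) <= Num.sqrt a + Num.sqrt b.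
Proof.
move=> a_ge0 b_ge0; rewrite -(ler_pXn2r (n := 2)) ?nnegrE ?addr_ge0 ?sqrtr_ge0 //.
rewrite sqrrD !sqr_sqrtr ?addr_ge0 // mulr2n.
by have := mulr_ge0 (sqrtr_ge0 a) (sqrtr_ge0 b); lra.
Qed.

Section RealInequalities.
Variable R : realType.

Lemma log_convex_expn_le (a : nat -> R) : (forall j, 0 <= a j) ->
  (forall j, a j.+1 ^+ 2 <= a j * a j.+2) ->
  forall N, a 1%N ^+ N.+1 <= a 0%N ^+ N * a N.+1.
Proof.
move=> a_ge0 a_lc.
have ratio j : a 1%N * a j <= a 0%N * a j.+1.
  elim: j => [|j IHj]; first by rewrite mulrC.
  have [->|aj_neq0] := eqVneq (a j.+1) 0; first by rewrite mulr0 mulr_ge0.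
  have aj_gt0 : 0 < a j.+1 by rewrite lt_def aj_neq0 a_ge0.
  rewrite -(ler_pM2r aj_gt0) -mulrA -expr2.
  apply: le_trans (ler_wpM2l (a_ge0 1%N) (a_lc j)) _.
  by rewrite mulrA [X in _ <= X]mulrAC ler_wpM2r.
elim=> [|N IHN]; first by rewrite expr1 expr0 mul1r.
rewrite exprS; apply: le_trans (ler_wpM2l (a_ge0 1%N) IHN) _.
by rewrite mulrCA exprSr -mulrA ler_wpM2l ?exprn_ge0.
Qed.

Lemma bernoulli_ineq (x : R) N : 0 <= x -> 1 + N%:R * x <= (1 + x) ^+ N.
Proof.
move=> x_ge0; elim: N => [|N IHN]; first by rewrite mul0r addr0 expr0.
rewrite exprS; apply: le_trans (ler_wpM2l _ IHN); last by rewrite addr_ge0.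
by rewrite -natr1; have := mulr_ge0 (mulr_ge0 (ler0n R N) x_ge0) x_ge0; nra.
Qed.

Lemma le1_of_bounded_expn (q C : R) : (forall N, q ^+ N.+1 <= C) -> q <= 1.
Proof.
move=> qC; rewrite leNgt; apply/negP => q_gt1.
have x_gt0 : 0 < q - 1 by rewrite subr_gt0.
set N := Num.bound (`|C| / (q - 1)).
have : `|C| < N%:R * (q - 1).
  by rewrite -ltr_pdivrMr // archi_boundP // divr_ge0 // ltW.
have := bernoulli_ineq N.+1 (ltW x_gt0); rewrite addrCA subrr addr0 -natr1.
by have := qC N; have := ler_norm C; lra.
Qed.

Lemma le_of_log_convex_geometric (a : nat -> R) (C M : R) : 0 < M ->
  (forall j, 0 <= a j) -> (forall j, a j.+1 ^+ 2 <= a j * a j.+2) ->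
  (forall j, a j <= C * M ^+ j) -> a 1%N <= M * a 0%N.
Proof.
move=> M_gt0 a_ge0 a_lc a_le.
have [a0_eq0|a0_neq0] := eqVneq (a 0%N) 0.
  have := a_lc 0%N; rewrite a0_eq0 mul0r mulr0 => a1_le0.
  by rewrite -(ler_pXn2r (n := 2)) ?nnegrE ?expr0n.
have a0_gt0 : 0 < a 0%N by rewrite lt_def a0_neq0 a_ge0.
have Ma0_gt0 : 0 < M * a 0%N by rewrite mulr_gt0.
suff : a 1%N / (M * a 0%N) <= 1 by rewrite ler_pdivrMr // mul1r.
apply: (le1_of_bounded_expn (C := C / a 0%N)) => N.
rewrite expr_div_n ler_pdivrMr ?exprn_gt0 //.
have -> : C / a 0%N * (M * a 0%N) ^+ N.+1 = a 0%N ^+ N * (C * M ^+ N.+1).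
  by rewrite !exprS exprMn; set u := M ^+ N; set v := a 0%N ^+ N; field.
apply: le_trans (log_convex_expn_le a_ge0 a_lc N) _.
by rewrite ler_wpM2l ?exprn_ge0.
Qed.

Lemma subrXX_le (w c : R) n : 0 <= c <= w ->
  w ^+ n.+1 - c ^+ n.+1 <= n.+1%:R * w ^+ n * (w - c).
Proof.
case/andP=> c_ge0 cw; have w_ge0 := le_trans c_ge0 cw.
rewrite subrXX mulrC ler_wpM2r ?subr_ge0 //=.
apply: (@le_trans _ _ (\sum_(i < n.+1) w ^+ n)); last first.
  by rewrite sumr_const card_ord mulr_natl.
apply: ler_sum => i _; rewrite -[in X in _ <= X](subnK (ltnSE (ltn_ord i))) exprD.
by rewrite ler_wpM2l ?exprn_ge0 // lerXn2r.
Qed.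

Lemma sup_expn_le (E : set R) (c : R) n : 0 <= c ->
  (forall e, E e -> 0 <= e /\ e ^+ n.+1 <= c) -> sup E ^+ n.+1 <= c.
Proof.
move=> c_ge0 hE; have [hs|nhs] := pselect (has_sup E); last by rewrite sup_out ?expr0n.
set w := sup E; rewrite leNgt; apply/negP => cw.
have [[e0 Ee0] _] := hs.
have w_ge0 : 0 <= w by apply: le_trans (hE _ Ee0).1 (sup_upper_bound hs Ee0).
have K_gt0 : 0 < n.+1%:R * w ^+ n.
  rewrite mulr_gt0 // exprn_gt0 // lt_def w_ge0 andbT.
  by apply: contraTneq cw => ->; rewrite expr0n /= -leNgt.
set K := n.+1%:R * w ^+ n in K_gt0 *.
have d_gt0 : 0 < (w ^+ n.+1 - c) / K by rewrite divr_gt0 // subr_gt0.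
have [e Ee we] := sup_adherent d_gt0 hs; rewrite -/w in we.
have [e_ge0 ec] := hE e Ee.
have ew : e <= w := sup_upper_bound hs Ee.
have : K * (w - e) < K * ((w ^+ n.+1 - c) / K) by rewrite ltr_pM2l //; lra.
rewrite [X in _ < X]mulrC divfK ?gt_eqF //.
by have := subrXX_le n (_ : 0 <= e <= w); rewrite e_ge0 ew -/K => /(_ isT); lra.
Qed.

Lemma chebyshev_sum k (F : 'I_k -> R) p : (forall i, 0 <= F i) ->
  (\sum_i F i) * (\sum_i F i ^+ p) <= k%:R * \sum_i F i ^+ p.+1.
Proof.
move=> F_ge0.
have pair i j : F i * F j ^+ p + F j * F i ^+ p <= F i ^+ p.+1 + F j ^+ p.+1.
  suff : 0 <= (F i - F j) * (F i ^+ p - F j ^+ p) by rewrite !exprS; lra.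
  have [le_ij|lt_ji] := lerP (F i) (F j).
    by rewrite mulr_le0 // subr_le0 // lerXn2r ?nnegrE.
  by rewrite mulr_ge0 // subr_ge0 ?lerXn2r ?nnegrE // ltW.
have double_sum (G : 'I_k -> 'I_k -> R) :
    \sum_i \sum_j (G i j + G j i) = (\sum_i \sum_j G i j) *+ 2.
  under eq_bigr do rewrite big_split.
  by rewrite big_split /= [X in _ + X = _]exchange_big mulr2n.
have : \sum_i \sum_j (F i * F j ^+ p + F j * F i ^+ p) <=
       \sum_i \sum_j (F i ^+ p.+1 + F j ^+ p.+1).
  by apply: ler_sum => i _; apply: ler_sum => j _; apply: pair.
have lhs : \sum_i \sum_j (F i * F j ^+ p + F j * F i ^+ p) =
    (\sum_i \sum_j F i * F j ^+ p) *+ 2 := double_sum (fun i j => F i * F j ^+ p).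
have rhs : \sum_i \sum_j (F i ^+ p.+1 + F j ^+ p.+1) =
    (\sum_i \sum_(j < k) F i ^+ p.+1) *+ 2 := double_sum (fun i j => F i ^+ p.+1).
rewrite lhs rhs ler_pMn2r //.
by rewrite big_distrlr /=; under [X in _ <= X -> _]eq_bigr do rewrite sumr_const card_ord;
  rewrite sumrMnl mulr_natl.
Qed.

Lemma power_mean_le k (F : 'I_k -> R) m : (forall i, 0 <= F i) ->
  (\sum_i F i) ^+ m.+1 <= (k ^ m)%:R * \sum_i F i ^+ m.+1.
Proof.
move=> F_ge0; elim: m => [|m IHm]; first by rewrite expn0 mul1r !expr1.
rewrite exprS; apply: le_trans (ler_wpM2l (sumr_ge0 _ (fun i _ => F_ge0 i)) IHm) _.
by rewrite mulrCA expnS natrM [k%:R * _]mulrC -mulrA ler_wpM2l // chebyshev_sum.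
Qed.

End RealInequalities.

Section SemiInnerProduct.
Variables (R : realType) (V : lmodType R[i]) (HS : hilbert V).

Section BoundedOperator.
Variables (T : V -> V) (hT : bounded_op HS T).

Lemma bounded_opD x y : T (x + y) = T x + T y.
Proof. exact: hT.1. Qed.

Lemma bounded_opZ a x : T (a *: x) = a *: T x.
Proof. exact: hT.2.1. Qed.

Lemma bounded_op0 : T 0 = 0.
Proof. by apply: (addrI (T 0)); rewrite -bounded_opD !addr0. Qed.

Lemma bounded_opB x y : T (x - y) = T x - T y.
Proof. by rewrite bounded_opD -scaleN1r bounded_opZ scaleN1r. Qed.

Lemma bounded_op_pos : exists2 M : R, 0 < M & forall x, hnorm HS (T x) <= M * hnorm HS x.
Proof.
have [_ [_ [M hM]]] := hT; exists (`|M| + 1); first by rewrite ltr_wpDl.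
move=> x; apply: le_trans (hM x) (ler_wpM2r (sqrtr_ge0 _) _).
by have := ler_norm M; lra.
Qed.

End BoundedOperator.

Lemma innerDl x y z : inner HS (x + y) z = inner HS x z + inner HS y z.
Proof. exact: ipDl. Qed.

Lemma innerZl a x y : inner HS (a *: x) y = a * inner HS x y.
Proof. exact: ipZl. Qed.

Lemma inner_conj x y : inner HS y x = (inner HS x y)^*%C.
Proof. exact: ip_conj. Qed.

Lemma inner_ge0 x : 0 <= inner HS x x.
Proof. exact: ip_ge0. Qed.

Lemma hnorm_sqr x : hnorm HS x ^+ 2 = Re (inner HS x x).
Proof. exact: (seminorm_sqr inner_ge0). Qed.

Lemma Re_inner_le x y : Re (inner HS x y) <= hnorm HS x * hnorm HS y.
Proof. exact: (Re_herm_le innerDl innerZl inner_conj inner_ge0). Qed.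

Lemma hnormD x y : hnorm HS (x + y) <= hnorm HS x + hnorm HS y.
Proof. exact: (seminormD innerDl innerZl inner_conj inner_ge0). Qed.

Lemma hnorm_eq0 x : hnorm HS x = 0 -> x = 0.
Proof.
by move/(herm_eq0_of_seminorm_eq0 innerDl innerZl inner_conj inner_ge0 x); apply: ip_eq0.
Qed.

Variables (A : V -> V) (hA : positive_op HS A).

Lemma innerA_Dl x y z : innerA HS A (x + y) z = innerA HS A x z + innerA HS A y z.
Proof. by rewrite /innerA (bounded_opD hA.1) innerDl. Qed.

Lemma innerA_Zl a x y : innerA HS A (a *: x) y = a * innerA HS A x y.
Proof. by rewrite /innerA (bounded_opZ hA.1) innerZl. Qed.

Lemma innerA_ge0 x : 0 <= innerA HS A x x.
Proof. exact: hA.2. Qed.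

Lemma innerA_conj x y : innerA HS A y x = (innerA HS A x y)^*%C.
Proof.
(* Compare the form with its conjugate transpose: over C, sesquilinear forms
   agreeing on the diagonal are equal, and the diagonal here is real. *)
have innerA_Dr u v w : innerA HS A u (v + w) = innerA HS A u v + innerA HS A u w.
  exact: (hermDr innerDl inner_conj).
have innerA_Zr a u v : innerA HS A u (a *: v) = a^*%C * innerA HS A u v.
  exact: (hermZr innerZl inner_conj).
apply: (sesquilinear_eq_of_diag innerA_Dl innerA_Dr innerA_Zl innerA_Zr
          (f2 := fun u v => (innerA HS A v u)^*%C)) => /=.
- by move=> u v w; rewrite innerA_Dr rmorphD.
- by move=> u v w; rewrite innerA_Dl rmorphD.
- by move=> a u v; rewrite innerA_Zr rmorphM /= conjcK.
- by move=> a u v; rewrite innerA_Zl rmorphM.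
- by move=> u; rewrite -(RRe_real (ger0_real (innerA_ge0 u))) conjc_real.
Qed.

Lemma normA_sqr x : normA HS A x ^+ 2 = Re (innerA HS A x x).
Proof. exact: (seminorm_sqr innerA_ge0). Qed.

Lemma Re_innerA_le x y : Re (innerA HS A x y) <= normA HS A x * normA HS A y.
Proof. exact: (Re_herm_le innerA_Dl innerA_Zl innerA_conj innerA_ge0). Qed.

Lemma innerA_CauchySchwarz x y :
  modsq (innerA HS A x y) <= Re (innerA HS A x x) * Re (innerA HS A y y).
Proof. exact: (herm_CauchySchwarz innerA_Dl innerA_Zl innerA_conj innerA_ge0). Qed.

Lemma A_adjoint_sym (U W : V -> V) :
  (forall x y, innerA HS A (U x) y = innerA HS A x (W y)) ->
  forall x y, innerA HS A (W x) y = innerA HS A x (U y).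
Proof. by move=> UW x y; rewrite innerA_conj -UW -innerA_conj. Qed.

Lemma normA_le_hnorm : exists2 c : R, 0 <= c & forall w, normA HS A w <= c * hnorm HS w.
Proof.
have [M M_gt0 hM] := bounded_op_pos hA.1.
exists (Num.sqrt M); first exact: sqrtr_ge0.
move=> w; rewrite -(ler_pXn2r (n := 2)) ?nnegrE ?mulr_ge0 ?sqrtr_ge0 //.
rewrite normA_sqr exprMn (sqr_sqrtr (ltW M_gt0)) expr2 mulrA.
by apply: le_trans (Re_inner_le _ _) _; rewrite ler_wpM2r ?sqrtr_ge0.
Qed.

Lemma normA_selfadjoint_le (B : V -> V) (M : R) : 0 < M ->
  (forall x, hnorm HS (B x) <= M * hnorm HS x) ->
  (forall u v, innerA HS A (B u) v = innerA HS A u (B v)) ->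
  forall x, normA HS A (B x) <= M * normA HS A x.
Proof.
move=> M_gt0 hB B_sa x.
(* [j |-> ||B^j x||_A] is log-convex and grows at most like [M^j]. *)
have [c c_ge0 hc] := normA_le_hnorm.
apply: (le_of_log_convex_geometric (a := fun j => normA HS A (iter j B x))
          (C := c * hnorm HS x)) => // [j|j|j]; first exact: sqrtr_ge0.
  rewrite normA_sqr /= B_sa; exact: Re_innerA_le.
apply: le_trans (hc _) _; rewrite -mulrA ler_wpM2l //.
elim: j => [|j IHj]; first by rewrite expr0 mulr1.
by apply: le_trans (hB _) _; rewrite exprS mulrCA ler_pM2l.
Qed.

Lemma BA_normA_bounded (T : V -> V) : BA HS A T ->
  exists2 c : R, 0 <= c & forall x, normA HS A (T x) <= c * normA HS A x.
Proof.
case=> bT [S [bS TS]].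
have [MT MT_gt0 hMT] := bounded_op_pos bT; have [MS MS_gt0 hMS] := bounded_op_pos bS.
have STx_le : forall x, normA HS A (S (T x)) <= MS * MT * normA HS A x.
  apply: normA_selfadjoint_le; first by rewrite mulr_gt0.
    by move=> x; apply: le_trans (hMS _) _; rewrite -mulrA ler_pM2l.
  by move=> u v; rewrite (A_adjoint_sym TS) TS.
exists (Num.sqrt (MS * MT)); first exact: sqrtr_ge0.
move=> x; rewrite -(ler_pXn2r (n := 2)) ?nnegrE ?mulr_ge0 ?sqrtr_ge0 //.
rewrite normA_sqr TS exprMn sqr_sqrtr ?mulr_ge0 ?(ltW MS_gt0) ?(ltW MT_gt0) // expr2 mulrCA.
by apply: le_trans (Re_innerA_le _ _) _; rewrite ler_wpM2l ?sqrtr_ge0.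
Qed.

End SemiInnerProduct.

Section NumericalRadius.
Variables (R : realType) (V : lmodType R[i]) (HS : hilbert V) (A : V -> V).

Lemma omegaA_ge0 T : 0 <= omegaA HS A T.
Proof.
have [hs|nhs] := pselect (has_sup [set r : R | exists x, normA HS A x = 1 /\
                                   r = Re `|innerA HS A (T x) x|]); last by rewrite /omegaA sup_out.
have [[e Ee] _] := hs; apply: le_trans (sup_upper_bound hs Ee).
by case: Ee => x [_ ->]; apply: Re_norm_ge0.
Qed.

Lemma omegaA_ge T (C : R) x :
  (forall y, normA HS A y = 1 -> Re `|innerA HS A (T y) y| <= C) ->
  normA HS A x = 1 -> Re `|innerA HS A (T x) x| <= omegaA HS A T.
Proof.
move=> TC x1; apply: sup_upper_bound; last by exists x.
by split; [exists (Re `|innerA HS A (T x) x|), x | exists C => _ [y [y1 ->]]; apply: TC].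
Qed.

Lemma omegaA_expn_le T (c : R) n : 0 <= c ->
  (forall x, normA HS A x = 1 -> Re `|innerA HS A (T x) x| ^+ n.+1 <= c) ->
  omegaA HS A T ^+ n.+1 <= c.
Proof.
move=> c_ge0 Tc; apply: sup_expn_le => // _ [x [x1 ->]].
by split; [apply: Re_norm_ge0 | apply: Tc].
Qed.

End NumericalRadius.

Lemma nat_even_or_odd n : exists m, n = (m + m)%N \/ n = (m + m).+1.
Proof.
exists n./2; rewrite addnn; have := odd_double_half n.
by case: (odd n) => [|/=]; rewrite ?add1n ?add0n => ->; [right | left].
Qed.

Section McCarthy.
Variables (R : realType) (V : lmodType R[i]) (HS : hilbert V) (A : V -> V).
Hypothesis hA : positive_op HS A.
Variable P : V -> V.
Hypothesis P_sa : forall u v, innerA HS A (P u) v = innerA HS A u (P v).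
Hypothesis P_ge0 : forall u, 0 <= innerA HS A (P u) u.

Lemma oppowD i j u : oppow P (i + j) u = oppow P i (oppow P j u).
Proof. by elim: i => //= i IHi; rewrite /opcomp -/(oppow P (i + j)) -/(oppow P i) IHi. Qed.

Lemma innerA_oppow_sym j u v : innerA HS A (oppow P j u) v = innerA HS A u (oppow P j v).
Proof.
elim: j u v => // j IHj u v.
by rewrite [in LHS]/oppow /= /opcomp -/(oppow P j) P_sa IHj -(oppowD j 1) addn1.
Qed.

Let hform u v := innerA HS A (P u) v.
Let hformDl x y z : hform (x + y) z = hform x z + hform y z.
Proof. by rewrite /hform !P_sa (innerA_Dl hA). Qed.
Let hformZl a x y : hform (a *: x) y = a * hform x y.
Proof. by rewrite /hform !P_sa (innerA_Zl hA). Qed.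
Let hform_conj x y : hform y x = (hform x y)^*%C.
Proof. by rewrite /hform P_sa (innerA_conj hA). Qed.

Variable x : V.

Lemma innerA_oppowD i j :
  innerA HS A (oppow P (i + j) x) x = innerA HS A (oppow P j x) (oppow P i x).
Proof. by rewrite oppowD innerA_oppow_sym. Qed.

Lemma innerA_oppow_odd c :
  innerA HS A (oppow P (c + c).+1 x) x = hform (oppow P c x) (oppow P c x).
Proof. by rewrite -addSn innerA_oppowD /hform P_sa. Qed.

Lemma innerA_oppow_ge0 j : 0 <= innerA HS A (oppow P j x) x.
Proof.
have [c [->|->]] := nat_even_or_odd j; last by rewrite innerA_oppow_odd; apply: P_ge0.
by rewrite innerA_oppowD (innerA_ge0 hA).
Qed.

Lemma innerA_oppow_log_convex j :
  Re (innerA HS A (oppow P j.+1 x) x) ^+ 2 <=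
  Re (innerA HS A (oppow P j x) x) * Re (innerA HS A (oppow P j.+2 x) x).
Proof.
(* Cauchy-Schwarz for <.,.>_A when j is even, and for <P.,.>_A when j is odd. *)
have e1 c : ((c + c).+1 = c.+1 + c)%N by rewrite addSn.
have e2 c : ((c + c).+2 = c.+1 + c.+1)%N by rewrite addSn addnS.
have [c [->|->]] := nat_even_or_odd j.
  rewrite e1 e2 !innerA_oppowD; apply: le_trans (Re_sqr_le_modsq _) _.
  exact: (innerA_CauchySchwarz hA).
rewrite e2 innerA_oppowD !innerA_oppow_odd; apply: le_trans (Re_sqr_le_modsq _) _.
exact: (herm_CauchySchwarz hformDl hformZl hform_conj P_ge0 (oppow P c x) (oppow P c.+1 x)).
Qed.

Lemma innerA_McCarthy N : Re (innerA HS A x x) = 1 ->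
  Re (innerA HS A (P x) x) ^+ N.+1 <= Re (innerA HS A (oppow P N.+1 x) x).
Proof.
move=> x1; have := log_convex_expn_le (fun j => Re_ge0 (innerA_oppow_ge0 j))
                                     innerA_oppow_log_convex N.
by rewrite /= x1 expr1n mul1r.
Qed.

End McCarthy.

Lemma normA_oppow_le (R : realType) (V : lmodType R[i]) (HS : hilbert V) (A B : V -> V) (c : R) :
  0 <= c -> (forall w, normA HS A (B w) <= c * normA HS A w) ->
  forall j w, normA HS A (oppow B j w) <= c ^+ j * normA HS A w.
Proof.
move=> c_ge0 Bc; elim=> [|j IHj] w; first by rewrite expr0 mul1r.
by apply: le_trans (Bc _) _; rewrite exprS -mulrA ler_wpM2l.
Qed.

Section SharpProduct.
Variables (R : realType) (V : lmodType R[i]) (HS : hilbert V) (A : V -> V).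
Hypothesis hA : positive_op HS A.
Variables (T X : V -> V).
Hypothesis hT : BA HS A T.
Hypothesis hX : forall x y, innerA HS A (X x) y = innerA HS A x (T y).

Let hTX : forall x y, innerA HS A (T x) y = innerA HS A x (X y) := A_adjoint_sym hA hX.
Let P := opcomp X T.
Let Q := opcomp T X.
Let P_sa u v : innerA HS A (P u) v = innerA HS A u (P v). Proof. by rewrite hX hTX. Qed.
Let Q_sa u v : innerA HS A (Q u) v = innerA HS A u (Q v). Proof. by rewrite hTX hX. Qed.
Let P_ge0 u : 0 <= innerA HS A (P u) u. Proof. by rewrite hX; apply: innerA_ge0. Qed.
Let Q_ge0 u : 0 <= innerA HS A (Q u) u. Proof. by rewrite hTX; apply: innerA_ge0. Qed.

Lemma normA_adjoint_le (c : R) : (forall w, normA HS A (T w) <= c * normA HS A w) ->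
  forall w, normA HS A (X w) <= c * normA HS A w.
Proof.
move=> Tc w; have [Xw_eq0|Xw_neq0] := eqVneq (normA HS A (X w)) 0.
  by rewrite Xw_eq0 (le_trans (sqrtr_ge0 _) (Tc w)).
have Xw_gt0 : 0 < normA HS A (X w) by rewrite lt_def Xw_neq0 sqrtr_ge0.
rewrite -(ler_pM2r Xw_gt0) -expr2 (normA_sqr hA) hX.
apply: le_trans (Re_innerA_le hA _ _) _.
by rewrite [X in _ <= X]mulrAC mulrC ler_wpM2r ?sqrtr_ge0.
Qed.

Let sharp_op n := opadd (oppow P n) (opscale 'i%C (oppow Q n)).

Lemma Re_norm_innerA_sharp_op n y : Re `|innerA HS A (sharp_op n y) y| =
  Num.sqrt (Re (innerA HS A (oppow P n y) y) ^+ 2 + Re (innerA HS A (oppow Q n y) y) ^+ 2).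
Proof.
rewrite /sharp_op /opadd /opscale (innerA_Dl hA) (innerA_Zl hA).
rewrite -(RRe_real (ger0_real (innerA_oppow_ge0 hA P_sa P_ge0 y n))).
by rewrite -(RRe_real (ger0_real (innerA_oppow_ge0 hA Q_sa Q_ge0 y n))) Re_norm_complex.
Qed.

Lemma sharp_op_bounded n : exists C, forall y, normA HS A y = 1 ->
  Re `|innerA HS A (sharp_op n y) y| <= C.
Proof.
have [c c_ge0 Tc] := BA_normA_bounded hA hT; have Xc := normA_adjoint_le Tc.
have Pc w : normA HS A (P w) <= c ^+ 2 * normA HS A w.
  by apply: le_trans (Xc _) _; rewrite expr2 -mulrA ler_wpM2l.
have Qc w : normA HS A (Q w) <= c ^+ 2 * normA HS A w.
  by apply: le_trans (Tc _) _; rewrite expr2 -mulrA ler_wpM2l.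
set b := c ^+ (2 * n); exists (Num.sqrt (b ^+ 2 + b ^+ 2)) => y y1.
have pow_le (B : V -> V) : (forall u v, innerA HS A (B u) v = innerA HS A u (B v)) ->
    (forall u, 0 <= innerA HS A (B u) u) ->
    (forall w, normA HS A (B w) <= c ^+ 2 * normA HS A w) ->
    Re (innerA HS A (oppow B n y) y) ^+ 2 <= b ^+ 2.
  move=> B_sa B_ge0 Bc; apply: lerXn2r; rewrite ?nnegrE ?exprn_ge0 //.
    exact: Re_ge0 (innerA_oppow_ge0 hA B_sa B_ge0 y n).
  apply: le_trans (Re_innerA_le hA _ _) _.
  rewrite y1 mulr1; have := normA_oppow_le (exprn_ge0 2 c_ge0) Bc n y.
  by rewrite y1 mulr1 -exprM.
rewrite Re_norm_innerA_sharp_op; apply: ler_wsqrtr.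
by rewrite lerD // pow_le.
Qed.

Lemma innerA_sharp_op_lower N x : normA HS A x = 1 ->
  Re `|innerA HS A (T x) x| ^+ (2 * N.+1) * Num.sqrt 2 <= omegaA HS A (sharp_op N.+1).
Proof.
move=> x1; have [C hC] := sharp_op_bounded N.+1.
apply: le_trans (omegaA_ge hC x1); rewrite Re_norm_innerA_sharp_op.
have x1' : Re (innerA HS A x x) = 1 by rewrite -(normA_sqr hA) x1 expr1n.
have Tx_le (B : V -> V) : (forall u v, innerA HS A (B u) v = innerA HS A u (B v)) ->
    (forall u, 0 <= innerA HS A (B u) u) ->
    modsq (innerA HS A (T x) x) <= Re (innerA HS A (B x) x) ->
    Re `|innerA HS A (T x) x| ^+ (2 * N.+1) <= Re (innerA HS A (oppow B N.+1 x) x).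
  move=> B_sa B_ge0 TB; rewrite Re_norm_expr2n.
  apply: le_trans (innerA_McCarthy hA B_sa B_ge0 N x1').
  by apply: lerXn2r; rewrite ?nnegrE ?modsq_ge0 ?(le_trans (modsq_ge0 _) TB).
have TP : modsq (innerA HS A (T x) x) <= Re (innerA HS A (P x) x).
  by have := innerA_CauchySchwarz hA (T x) x; rewrite x1' mulr1 hX.
have TQ : modsq (innerA HS A (T x) x) <= Re (innerA HS A (Q x) x).
  by have := innerA_CauchySchwarz hA x (X x); rewrite x1' mul1r /Q /opcomp !hTX.
have := Tx_le P P_sa P_ge0 TP; have := Tx_le Q Q_sa Q_ge0 TQ.
set r := Re `|_| ^+ _; set p := Re _; set q := Re _ => rq rp.
have r_ge0 : 0 <= r by rewrite exprn_ge0 ?Re_norm_ge0.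
rewrite -[r]ger0_norm // -sqrtr_sqr -sqrtrM ?sqr_ge0 //; apply: ler_wsqrtr.
by rewrite mulr_natr mulr2n lerD // lerXn2r ?nnegrE // (le_trans r_ge0).
Qed.

End SharpProduct.

Definition hconverges (R : realType) (V : lmodType R[i]) (HS : hilbert V) (u : nat -> V) (l : V) :=
  forall e : R, 0 < e -> exists N, forall n, (N <= n)%N -> hnorm HS (u n - l) < e.

Section Projection.
Variables (R : realType) (V : lmodType R[i]) (HS : hilbert V) (K : V -> Prop).
Hypotheses (K0 : K 0) (K_add : forall x y, K x -> K y -> K (x + y))
           (K_scale : forall a x, K x -> K (a *: x))
           (K_closed : forall u l, (forall n, K (u n)) -> hconverges HS u l -> K l).
Variable v : V.

Let dist2 z := Re (inner HS (v - z) (v - z)).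
Let d := inf [set dist2 z | z in K].

Let dist2_ge0 z : 0 <= dist2 z.
Proof. exact: (Re_herm_ge0 (inner_ge0 HS)). Qed.

Lemma proj_inf_le z : K z -> d <= dist2 z.
Proof. by move=> Kz; apply: ge_inf; [exists 0 => _ [y _ <-]; apply: dist2_ge0 | exists z]. Qed.

Lemma proj_inf_ge0 : 0 <= d.
Proof. by apply: lb_le_inf; [exists (dist2 0), 0 | move=> _ [y _ <-]; apply: dist2_ge0]. Qed.

Lemma proj_minimizing_seq :
  exists zs : nat -> V, forall m, K (zs m) /\ dist2 (zs m) < d + m.+1%:R^-1.
Proof.
have hinf : has_inf [set dist2 z | z in K].
  by split; [exists (dist2 0), 0 | exists 0 => _ [y _ <-]; apply: dist2_ge0].
have near_inf m : exists z, K z /\ dist2 z < d + m.+1%:R^-1.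
  have inv_gt0 : 0 < m.+1%:R^-1 :> R by rewrite invr_gt0.
  by have [_ [z Kz <-] ?] := inf_adherent inv_gt0 hinf; exists z.
by have [zs hzs] := boolp.choice near_inf; exists zs.
Qed.

Section MinimizingSequence.
Variable zs : nat -> V.
Hypothesis zs_min : forall m, K (zs m) /\ dist2 (zs m) < d + m.+1%:R^-1.

Lemma minimizing_seq_close m k :
  Re (inner HS (zs m - zs k) (zs m - zs k)) <= 2 * m.+1%:R^-1 + 2 * k.+1%:R^-1.
Proof.
have [Km hm] := zs_min m; have [Kk hk] := zs_min k.
set mid := 2%:R^-1 *: (zs m + zs k).
have Kmid : K mid by apply/K_scale/K_add.
have half : (2%:R^-1 + 2%:R^-1 : R[i]) = 1 by rewrite -mulr2n -[_ *+ 2]mulr_natl mulfV ?pnatr_eq0.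
have := Re_herm_parallelogram (innerDl HS) (innerZl HS) (inner_conj HS) (v - zs k) (v - zs m).
have -> : v - zs k - (v - zs m) = zs m - zs k by rewrite opprB addrC addrA subrK.
have -> : v - zs k + (v - zs m) = (v - mid) + (v - mid).
  rewrite addrACA -opprD [RHS]addrACA -opprD -scalerDl half scale1r.
  by rewrite [zs k + _]addrC.
rewrite (Re_hermDD (innerDl HS) (inner_conj HS)).
move: (proj_inf_le Kmid) hm hk; rewrite /dist2.
by set a := m.+1%:R^-1; set b := k.+1%:R^-1; lra.
Qed.

Lemma minimizing_seq_cauchy (e : R) : 0 < e ->
  exists N, forall m n, (N <= m)%N -> (N <= n)%N -> hnorm HS (zs m - zs n) < e.
Proof.
move=> e_gt0; have e2_gt0 : 0 < e ^+ 2 / 4 by rewrite divr_gt0 ?exprn_gt0.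
have [N hN] := exists_inv_succ_lt e2_gt0.
exists N => m n Nm Nn.
rewrite -(ltr_pXn2r (n := 2)) ?nnegrE ?sqrtr_ge0 ?(ltW e_gt0) // (hnorm_sqr HS).
apply: le_lt_trans (minimizing_seq_close m n) _.
have := hN m Nm; have := hN n Nn.
by set a := m.+1%:R^-1; set b := n.+1%:R^-1; lra.
Qed.

Lemma minimizing_seq_lim_dist l : hconverges HS zs l -> dist2 l <= d.
Proof.
move=> zs_l; have d_ge0 := proj_inf_ge0.
rewrite /dist2 -(hnorm_sqr HS) -(sqr_sqrtr d_ge0) lerXn2r ?nnegrE ?sqrtr_ge0 //.
apply/ler_addgt0Pr => e e_gt0; have e2_gt0 : 0 < e / 2 by rewrite divr_gt0.
have [N1 hN1] := zs_l _ e2_gt0.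
have [N2 hN2] := exists_inv_succ_lt (exprn_gt0 2 e2_gt0).
set m := maxn N1 N2; have [_ hm] := zs_min m.
have := hnormD HS (v - zs m) (zs m - l).
rewrite addrA subrK => /le_trans; apply.
have a_le : hnorm HS (v - zs m) <= Num.sqrt d + e / 2.
  apply: le_trans (ler_wsqrtr (ltW hm)) _.
  have inv_ge0 : 0 <= m.+1%:R^-1 :> R by rewrite invr_ge0.
  apply: le_trans (sqrtrD_le d_ge0 inv_ge0) _.
  rewrite lerD2l -(ger0_norm (ltW e2_gt0)) -sqrtr_sqr; apply/ler_wsqrtr/ltW.
  exact: hN2 (leq_maxr _ _).
by have := hN1 m (leq_maxl _ _); lra.
Qed.

End MinimizingSequence.

Lemma proj_exists_minimizer : exists2 l, K l & forall z, K z -> dist2 l <= dist2 z.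
Proof.
have [zs zs_min] := proj_minimizing_seq.
have [l zs_l] := @ip_complete _ _ HS zs (minimizing_seq_cauchy zs_min).
exists l; first exact: K_closed (fun n => (zs_min n).1) zs_l.
by move=> z Kz; apply: le_trans (minimizing_seq_lim_dist zs_min zs_l) (proj_inf_le Kz).
Qed.

Lemma minimizer_orthogonal l : K l -> (forall z, K z -> dist2 l <= dist2 z) ->
  forall w, K w -> inner HS (v - l) w = 0.
Proof.
move=> Kl l_min w Kw; set c := inner HS (v - l) w.
apply: modsq_eq0; apply/le_anti; rewrite modsq_ge0 andbT -(mul0r (Re (inner HS w w))).
apply: le_of_quadratic_ge0 => //; rewrite ?modsq_ge0 ?(Re_herm_ge0 (inner_ge0 HS)) // => t _.
have := l_min _ (K_add Kl (K_scale (t%:C * c)%C Kw)).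
by rewrite /dist2 opprD addrA (Re_herm_expand (innerDl HS) (innerZl HS) (inner_conj HS)); lra.
Qed.

Lemma projection_exists : exists2 l, K l & forall w, K w -> inner HS (v - l) w = 0.
Proof.
have [l Kl l_min] := proj_exists_minimizer.
by exists l => //; apply: minimizer_orthogonal.
Qed.

End Projection.

Lemma bounded_op_ker_closed (R : realType) (V : lmodType R[i]) (HS : hilbert V) (A : V -> V) :
  bounded_op HS A -> forall u l, (forall n, A (u n) = 0) -> hconverges HS u l -> A l = 0.
Proof.
move=> bA u l Au0 u_l; have [M M_gt0 hM] := bounded_op_pos bA.
apply: (@hnorm_eq0 _ _ HS); apply/le_anti; rewrite sqrtr_ge0 andbT.
apply/ler_addgt0Pr => e e_gt0; rewrite add0r.
have [N hN] := u_l _ (divr_gt0 e_gt0 M_gt0).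
have -> : A l = - A (u N - l) by rewrite (bounded_opB bA) Au0 sub0r opprK.
rewrite /hnorm (Re_hermNN (innerZl HS) (inner_conj HS)).
apply: le_trans (hM _) _; rewrite -ler_pdivlMl // mulrC.
exact: ltW (hN N (leqnn N)).
Qed.

Lemma ker_projection (R : realType) (V : lmodType R[i]) (HS : hilbert V) (A : V -> V) :
  bounded_op HS A -> forall v,
  exists p, A p = 0 /\ forall w, A w = 0 -> inner HS (v - p) w = 0.
Proof.
move=> bA v; suff [p Ap p_orth] : exists2 p, A p = 0 & forall w, A w = 0 -> inner HS (v - p) w = 0.
  by exists p.
apply: (@projection_exists _ _ HS (fun z => A z = 0)).
- exact: bounded_op0 bA.
- by move=> a b Aa Ab; rewrite (bounded_opD bA) Aa Ab addr0.
- by move=> c a Aa; rewrite (bounded_opZ bA) Aa scaler0.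
- exact: bounded_op_ker_closed bA.
Qed.

Lemma sharpA_spec (R : realType) (V : lmodType R[i]) (HS : hilbert V) (A T : V -> V) :
  positive_op HS A -> BA HS A T ->
  forall x y, innerA HS A (sharpA HS A T x) y = innerA HS A x (T y).
Proof.
move=> hA [_ [S [_ TS]]].
(* With [p x] the projection of [S x] onto N(A), [fun x => S x - p x] is a
   reduced solution, so the choice made by [sharpA] is not a junk value. *)
have [p hp] := boolp.choice (fun x => ker_projection hA.1 (S x)).
have [sharpA_eq _] : reduced_sol HS A T (sharpA HS A T).
  apply: (epsilon_spec (inhabits (fun=> 0)) (reduced_sol HS A T)).
  exists (fun x => S x - p x); split => [x y|x z Az]; last exact: (hp x).2.
  by rewrite (bounded_opB hA.1) (hp x).1 subr0; apply: (A_adjoint_sym hA TS).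
exact: sharpA_eq.
Qed.

Lemma Re_norm_innerA_opsum_le (R : realType) (V : lmodType R[i]) (HS : hilbert V) (A : V -> V)
    k (S : 'I_k -> V -> V) x : positive_op HS A ->
  Re `|innerA HS A (opsum S x) x| <= \sum_i Re `|innerA HS A (S i x) x|.
Proof.
move=> hA; rewrite /opsum (big_morph (fun u => innerA HS A u x) (fun a b => innerA_Dl hA a b x)
                                    (herm0l (innerA_Zl hA) x)).
by rewrite -raddf_sum; apply/Re_le/ler_norm_sum.
Qed.

Theorem theorem3p13 (R : realType) (V : lmodType R[i]) (HS : hilbert V)
  (A : V -> V) (hA : positive_op HS A) (hA0 : exists x, A x <> 0)
  (k : nat) (hk : (1 <= k)%N) (S : 'I_k -> V -> V)
  (hS : forall i, BA HS A (S i)) (n : nat) (hn : (1 <= n)%N) :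
  omegaA HS A (opsum S) ^+ (2 * n)
  <= (k ^ (2 * n - 1))%:R / Num.sqrt 2 *
     \sum_(i < k) omegaA HS A
        (opadd (oppow (opcomp (sharpA HS A (S i)) (S i)) n)
               (opscale 'i%C (oppow (opcomp (S i) (sharpA HS A (S i))) n))).
Proof.
case: n hn => [//|N] _.
have sqrt2_gt0 : 0 < Num.sqrt 2 :> R by rewrite sqrtr_gt0.
have e2n : (2 * N.+1 = (2 * N).+2)%N by rewrite mulnS.
rewrite e2n subn1 succnK; apply: omegaA_expn_le => [|x x1].
  by rewrite !mulr_ge0 ?invr_ge0 ?sqrtr_ge0 ?sumr_ge0 // => i _; apply: omegaA_ge0.
pose r i := Re `|innerA HS A (S i x) x|.
have r_ge0 i : 0 <= r i by apply: Re_norm_ge0.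
apply: le_trans (_ : _ <= (\sum_i r i) ^+ (2 * N).+2) _.
  rewrite ler_pXn2r ?nnegrE ?Re_norm_ge0 ?sumr_ge0 //.
  exact: Re_norm_innerA_opsum_le.
apply: le_trans (power_mean_le _ r_ge0) _.
rewrite -mulrA ler_wpM2l // mulr_sumr; apply: ler_sum => i _.
rewrite mulrC ler_pdivlMr // -e2n.
exact (innerA_sharp_op_lower hA (hS i) (sharpA_spec hA (hS i)) N x1).
Qed.
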